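(* Let $A$ be a Prüfer ring. Then every regular locally principal ideal of $A$ is invertible if and only if $A$ has the finite character.
   Context: $A$ is a commutative ring with identity and $T(A)$ its total quotient ring. An element of $A$ is regular if it is not a zero divisor; an ideal is regular if it contains a regular element. An ideal $\mathfrak a$ of $A$ is invertible if there is an $A$-submodule $U$ of $T(A)$ with $\mathfrak aU=A$. $A$ is a Prüfer ring if every finitely generated regular ideal of $A$ is invertible. An ideal is locally principal if $\mathfrak aA_{\mathfrak m}$ is principal for every maximal ideal $\mathfrak m$. $A$ has the finite character if every regular element of $A$ is contained in only finitely many maximal ideals of $A$. *)

(* Ideals are
   predicates R -> Prop; elements of the total quotient ring T(A) and of the
   localization A_m are represented as fractions (numerator, denominator). *)
From mathcomp Require Import all_boot all_order all_algebra.
Set Implicit Arguments. Unset Strict Implicit. Unset Printing Implicit Defensive.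
Import GRing.Theory.
Local Open Scope ring_scope.

Section CommRingDefs.
Variable R : comPzRingType.

Definition regular (x : R) : Prop := forall y : R, x * y = 0 -> y = 0.

Definition is_ideal (I : R -> Prop) : Prop :=
  [/\ I 0, (forall x y, I x -> I y -> I (x + y)) &
      (forall r x, I x -> I (r * x))].

Definition regular_ideal (I : R -> Prop) : Prop :=
  exists x, I x /\ regular x.

Definition maximal_ideal (m : R -> Prop) : Prop :=
  [/\ is_ideal m, ~ m 1 &
      (forall J : R -> Prop, is_ideal J -> (forall x, m x -> J x) ->
         (forall x, J x <-> m x) \/ J 1)].

Definition fin_gen (I : R -> Prop) : Prop :=
  exists s : seq R, forall x, I x <->
    exists c : seq R, x = \sum_(i < size s) c`_i * s`_i.

Definition tfrac (z : R * R) : Prop := regular z.2.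
Definition tfrac_eq (z w : R * R) : Prop := z.1 * w.2 = w.1 * z.2.
Definition tfrac_add (z w : R * R) : R * R := (z.1 * w.2 + w.1 * z.2, z.2 * w.2).
Definition tsubmodule (U : R * R -> Prop) : Prop :=
  [/\ (forall z, U z -> tfrac z),
      (forall z w, tfrac w -> tfrac_eq z w -> U z -> U w),
      U (0, 1),
      (forall z w, U z -> U w -> U (tfrac_add z w)) &
      (forall r z, U z -> U (r * z.1, z.2))].
(* the product a U: fractions equal to finite sums of x_i u_i, x_i in a, u_i in U *)
Definition tprod (I : R -> Prop) (U : R * R -> Prop) (z : R * R) : Prop :=
  tfrac z /\ exists l : seq (R * (R * R)),
    (forall p, p \in l -> I p.1 /\ U p.2) /\
    tfrac_eq z (foldr (fun p acc => tfrac_add (p.1 * p.2.1, p.2.2) acc) (0, 1) l).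
(* a is invertible: a U = A for some A-submodule U of T(A), where A is
   identified with the fractions c/1 *)
Definition invertible (I : R -> Prop) : Prop :=
  exists U, tsubmodule U /\
    forall z, tfrac z -> (tprod I U z <-> exists c : R, tfrac_eq z (c, 1)).

Definition prufer : Prop :=
  forall I, is_ideal I -> fin_gen I -> regular_ideal I -> invertible I.

Definition loc_eq (m : R -> Prop) (z w : R * R) : Prop :=
  exists u, ~ m u /\ u * (z.1 * w.2 - w.1 * z.2) = 0.
(* membership of x/s in the extended ideal a A_m *)
Definition in_ext (m I : R -> Prop) (z : R * R) : Prop :=
  exists y t, I y /\ ~ m t /\ loc_eq m z (y, t).
Definition loc_principal (m I : R -> Prop) : Prop :=
  exists p q, ~ m q /\ forall x s, ~ m s ->
    (in_ext m I (x, s) <-> exists r v, ~ m v /\ loc_eq m (x, s) (p * r, q * v)).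

Definition locally_principal (I : R -> Prop) : Prop :=
  forall m, maximal_ideal m -> loc_principal m I.

Definition finite_character : Prop :=
  forall x, regular x -> exists (n : nat) (f : nat -> (R -> Prop)),
    forall m, maximal_ideal m -> m x ->
      exists i, (i < n)%N /\ forall y, m y <-> f i y.

End CommRingDefs.

(* If the regular element x of a regular locally principal ideal I lies in only
   finitely many maximal ideals m_1, ..., m_n, choose y_i in I generating I at m_i.
   The finitely generated ideal K = (x, y_1, ..., y_n) is contained in I and agrees
   with I at every maximal ideal, so K = I, and K is invertible since A is Prufer.

   Conversely, if a regular x lies in infinitely many maximal ideals, split them
   repeatedly between two comaximal candidates to get pairwise comaximal, proper,
   finitely generated (hence invertible) ideals I_0, I_1, ... containing x.  The
   ideal J = sum_n (xA : I_n) = sum_n x I_n^-1 contains x and is locally principal,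
   since a maximal ideal contains at most one I_k.  If J were invertible it would be
   finitely generated, so (xA : I_N) would lie in sum_(n<N) (xA : I_n); localizing
   at a maximal ideal M containing I_N, where the I_n with n < N become trivial,
   this forces I_N^-1 into A_M, i.e. puts an element outside M into I_N. *)

From mathcomp Require Import all_boot all_algebra ring.
From mathcomp Require Import boolp classical_sets.
Set Implicit Arguments. Unset Strict Implicit. Unset Printing Implicit Defensive.
Import GRing.Theory.
Local Open Scope ring_scope.
Local Open Scope classical_set_scope.

Lemma dependent_choice_seq (T : Type) (P : seq T -> Prop) (Q : seq T -> T -> Prop) :
  P [::] -> (forall S, P S -> exists2 t, Q S t & P (rcons S t)) ->
  exists f : nat -> T, forall n, Q (mkseq f n) (f n).
Proof.
move=> P0 step.
pose next (S : {S | P S}) := cid2 (step _ (proj2_sig S)).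
pose succ (S : {S | P S}) : {S | P S} := exist P _ (s2valP' (next S)).
pose st n := iter n succ (exist P [::] P0).
pose f n := s2val (next (st n)).
have stE n : sval (st n) = mkseq f n by elim: n => //= n IH; rewrite mkseqS -IH.
by exists f => n; rewrite -stE; exact: s2valP.
Qed.

Section CommRing.
Variable R : comPzRingType.
Implicit Types (a b c d e r x y : R) (m A C I K P : set R).

Lemma regular1 : regular (1 : R).
Proof. by move=> y; rewrite mul1r. Qed.

Lemma regularM a b : regular a -> regular b -> regular (a * b).
Proof. by move=> ha hb y; rewrite -mulrA => /ha /hb. Qed.

Lemma regular_mulIf d a b : regular d -> a * d = b * d -> a = b.
Proof.
move=> hd e; apply/eqP; rewrite -subr_eq0; apply/eqP; apply: hd.
by rewrite mulrBr ![d * _]mulrC e subrr.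
Qed.

Section IdealLemmas.
Variable I : set R.
Hypothesis hI : is_ideal I.

Lemma ideal0 : I 0. Proof. by case: hI. Qed.
Lemma idealD a b : I a -> I b -> I (a + b). Proof. by case: hI => _ + _; apply. Qed.
Lemma idealMl r a : I a -> I (r * a). Proof. by case: hI => _ _; apply. Qed.
Lemma idealMr a r : I a -> I (a * r). Proof. by rewrite mulrC; apply: idealMl. Qed.

Lemma ideal_sum (T : eqType) (s : seq T) (F : T -> R) :
  (forall t, t \in s -> I (F t)) -> I (\sum_(t <- s) F t).
Proof. by move=> hF; rewrite big_seq; apply: (big_ind I); [exact: ideal0|exact: idealD|]. Qed.

End IdealLemmas.

Section MaximalIdeal.
Variable m : set R.
Hypothesis hm : maximal_ideal m.

Lemma maximal_ideal_ideal : is_ideal m. Proof. by case: hm. Qed.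
Lemma maximal_ideal_neq1 : ~ m 1. Proof. by case: hm. Qed.

Lemma maximal_inv_mod e : ~ m e -> exists c, m (1 - c * e).
Proof.
move=> me; have [mI _ mmax] := hm.
pose J y := exists c, m (y - c * e).
have JI : is_ideal J.
  split; first by exists 0; rewrite mul0r subr0; exact: ideal0.
  - move=> y z [c1 h1] [c2 h2]; exists (c1 + c2).
    have -> : y + z - (c1 + c2) * e = (y - c1 * e) + (z - c2 * e) by ring.
    exact: idealD.
  - move=> r y [c h]; exists (r * c).
    have -> : r * y - r * c * e = r * (y - c * e) by ring.
    exact: idealMl.
have [|Jm|//] := mmax J JI; first by move=> y my; exists 0; rewrite mul0r subr0.
by case: me; apply/Jm; exists 1; rewrite mul1r subrr; exact: ideal0.
Qed.

Lemma maximal_notinM a b : ~ m a -> ~ m b -> ~ m (a * b).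
Proof.
move=> /maximal_inv_mod [c ha] /maximal_inv_mod [d hb] hab.
apply: maximal_ideal_neq1; have mI := maximal_ideal_ideal.
move: (idealD mI (idealD mI ha (idealMl mI (c * a) hb)) (idealMl mI (c * d) hab)).
by have -> : 1 - c * a + c * a * (1 - d * b) + c * d * (a * b) = 1 by ring.
Qed.

End MaximalIdeal.

Lemma maximal_ideal_sub_eq (M N : set R) :
  maximal_ideal M -> maximal_ideal N -> M `<=` N -> M = N.
Proof.
move=> [_ _ Mmax] [NI N1 _] MN; have [NM|//] := Mmax N NI MN.
by apply/seteqP; split => y /NM.
Qed.

Lemma exists_maximal_ideal C : is_ideal C -> ~ C 1 -> exists2 m, maximal_ideal m & C `<=` m.
Proof.
move=> hC C1.
pose P : set (set R) := fun I => I = set0 \/ [/\ is_ideal I, C `<=` I & ~ I 1].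
have [M [PM Mmax]] : exists M, P M /\ forall B, M `<` B -> ~ P B.
  apply: Zorn_bigcup => F FP Ftot.
  have FI X y : F X -> X y -> [/\ is_ideal X, C `<=` X & ~ X 1].
    by move=> FX Xy; case: (FP X FX) => // X0; rewrite X0 in Xy.
  have [[X0 FX0 [y0 X0y0]]|F0] := pselect (exists2 X, F X & X !=set0); last first.
    left; apply/seteqP; split => // y [X FX Xy].
    by apply: F0; exists X => //; exists y.
  have [X0I CX0 _] := FI _ _ FX0 X0y0.
  right; split; [split| |].
  - by exists X0 => //; exact: ideal0.
  - move=> y z [X1 FX1 X1y] [X2 FX2 X2z].
    have [X1I _ _] := FI _ _ FX1 X1y; have [X2I _ _] := FI _ _ FX2 X2z.
    have [X12|X21] := Ftot _ _ FX1 FX2.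
      by exists X2 => //; exact: (idealD X2I (X12 _ X1y) X2z).
    by exists X1 => //; exact: (idealD X1I X1y (X21 _ X2z)).
  - move=> r y [X FX Xy]; have [XI _ _] := FI _ _ FX Xy.
    by exists X => //; exact: idealMl.
  - by move=> y Cy; exists X0 => //; exact: CX0.
  - by move=> [X FX X1]; case: (FI _ _ FX X1).
have PC : P C by right; split.
case: PM => [M0|[MI CM M1]].
  exfalso; apply: (Mmax C _ PC); rewrite M0.
  by split; [exact: sub0set | move/(_ 0 (ideal0 hC))].
exists M => //; split => // J JI MJ.
have [|J1] := pselect (J 1); [by right|left].
move=> y; split=> [Jy|]; last exact: MJ.
apply: contrapT => nMy; apply: (Mmax J); last by right; split => // z /CM /MJ.
by split => // JM; exact/nMy/JM.
Qed.

Lemma local_global_mem K a : is_ideal K ->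
  (forall m, maximal_ideal m -> exists2 v, ~ m v & K (v * a)) -> K a.
Proof.
move=> KI Kloc; pose C c := K (c * a).
have CI : is_ideal C.
  split; first by rewrite /C mul0r; exact: ideal0.
  - by move=> c1 c2 h1 h2; rewrite /C mulrDl; exact: idealD.
  - by move=> r c h; rewrite /C -mulrA; exact: idealMl.
have [C1|C1] := pselect (C 1); first by rewrite /C mul1r in C1.
have [m hm Cm] := exists_maximal_ideal CI C1.
by have [v nmv /Cm] := Kloc m hm.
Qed.

Definition span (s : seq R) : set R :=
  fun y => exists c : seq R, y = \sum_(i < size s) c`_i * s`_i.

Lemma span_fin_gen s : fin_gen (span s).
Proof. by exists s. Qed.

Lemma span_nil y : span [::] y <-> y = 0.
Proof.
split; first by move=> [c ->]; rewrite big_ord0.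
by move=> ->; exists [::]; rewrite big_ord0.
Qed.

Lemma span_cons a s y : span (a :: s) y <-> exists c z, span s z /\ y = c * a + z.
Proof.
split=> [[c ->]|[c0 [z [[c ->] ->]]]]; last by exists (c0 :: c); rewrite /= big_ord_recl.
exists c`_0, (\sum_(i < size s) (behead c)`_i * s`_i); split; first by exists (behead c).
by rewrite /= big_ord_recl; congr (_ + _); apply: eq_bigr => i _; rewrite nth_behead.
Qed.

Lemma span_ideal s : is_ideal (span s).
Proof.
elim: s => [|a s IH].
  split; first exact/span_nil.
  - by move=> y z /span_nil -> /span_nil ->; apply/span_nil; rewrite addr0.
  - by move=> r y /span_nil ->; apply/span_nil; rewrite mulr0.
split.
- by apply/span_cons; exists 0, 0; split; [exact: ideal0 | rewrite mul0r addr0].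
- move=> y z /span_cons [c1 [y1 [h1 ->]]] /span_cons [c2 [z1 [h2 ->]]].
  by apply/span_cons; exists (c1 + c2), (y1 + z1); split; [exact: idealD | ring].
- move=> r y /span_cons [c [z [h ->]]].
  by apply/span_cons; exists (r * c), (r * z); split; [exact: idealMl | ring].
Qed.

Lemma span_mem s a : a \in s -> span s a.
Proof.
elim: s => [//|b s IH]; rewrite in_cons => /predU1P [->|/IH sa]; apply/span_cons.
  by exists 1, 0; split; [exact: ideal0 (span_ideal s) | rewrite mul1r addr0].
by exists 0, a; split; last rewrite mul0r add0r.
Qed.

Lemma span_sub s I : is_ideal I -> (forall a, a \in s -> I a) -> span s `<=` I.
Proof.
move=> hI; elim: s => [|b s IH] hs y; first by move/span_nil ->; exact: ideal0.
move/span_cons => [c [z [sz ->]]]; apply: (idealD hI).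
  by apply: (idealMl hI); apply: hs; exact: mem_head.
by apply: IH sz => a sa; apply: hs; rewrite in_cons sa orbT.
Qed.

Lemma loc_principalP m I : maximal_ideal m -> is_ideal I ->
  loc_principal m I <->
  exists2 y, I y & forall a, I a -> exists v r, ~ m v /\ v * a = y * r.
Proof.
move=> hm hI; have m1 := maximal_ideal_neq1 hm.
split=> [[p [q [nmq Hpq]]]|[y Iy hy]].
- have [|y [t [Iy [nmt [u1 [nmu1 /= e1]]]]]] := (Hpq p q nmq).2.
    by exists 1, 1; split => //; exists 1; split => //=; ring.
  exists y => // a Ia.
  have [|r [v [nmv [u2 [nmu2 /= e2]]]]] := (Hpq a 1 m1).1.
    by exists a, 1; split => //; split => //; exists 1; split => //=; ring.
  exists (u1 * u2 * t * q * v), (u1 * u2 * q * r); split.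
    by repeat apply: (maximal_notinM hm).
  apply/eqP; rewrite -subr_eq0; apply/eqP.
  have -> : u1 * u2 * t * q * v * a - y * (u1 * u2 * q * r) =
    u1 * t * (u2 * (a * (q * v) - p * r * 1)) + u2 * r * (u1 * (p * t - y * q)) by ring.
  by rewrite e1 e2 !mulr0 addr0.
- exists y, 1; split => // z s nms; split.
  + move=> [y' [t [Iy' [nmt [u [nmu /= e]]]]]].
    have [v [r [nmv e']]] := hy y' Iy'.
    exists r, (t * v); split; first exact: maximal_notinM.
    exists u; split => //=.
    have -> : z * (1 * (t * v)) - y * r * s = v * (z * t - y' * s).
      by rewrite mulrBr -e'; ring.
    by rewrite mulrCA e mulr0.
  + move=> [r [v [nmv [u [nmu /= e]]]]].
    exists (y * r), v; split; first exact: (idealMr hI).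
    by split => //; exists u; split => //=; rewrite -e mul1r.
Qed.

Definition tfrac_sum (l : seq (R * (R * R))) : R * R :=
  foldr (fun p acc => tfrac_add (p.1 * p.2.1, p.2.2) acc) (0, 1) l.

(* The pairs (a, u) of l give elements a of I and u/d of I^-1: the dual basis
   description of invertibility, once sum a u = d. *)
Definition dual_family I d (l : seq (R * R)) :=
  regular d /\ forall p, p \in l -> I p.1 /\ forall b, I b -> exists c, b * p.2 = c * d.

Lemma tfrac_sum_dual I (l : seq (R * (R * R))) :
  (forall q, q \in l ->
     [/\ regular q.2.2, I q.1 & forall b, I b -> exists c, b * q.2.1 = c * q.2.2]) ->
  exists l', dual_family I (tfrac_sum l).2 l' /\
             \sum_(p <- l') p.1 * p.2 = (tfrac_sum l).1.
Proof.
elim: l => [|q l IH] hl.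
  by exists [::]; split; [split=> //; exact: regular1 | rewrite big_nil].
have [hq Iq hqI] := hl q (mem_head _ _).
have [|l' [[hd hl'] e]] := IH; first by move=> q' q'l; apply: hl; rewrite inE q'l orbT.
exists ((q.1, q.2.1 * (tfrac_sum l).2) :: [seq (p.1, p.2 * q.2.2) | p <- l']); split.
  split=> [|p]; first exact: regularM.
  rewrite in_cons => /predU1P [->|/mapP [p' p'l ->]] /=.
    by split=> // b /hqI [c ec]; exists c; rewrite mulrA ec mulrA.
  have [Ip hp] := hl' p' p'l; split=> // b /hp [c ec].
  by exists c; rewrite mulrA ec; ring.
rewrite big_cons big_map /= -e mulr_suml mulrA; congr (_ + _).
by apply: eq_bigr => p _; rewrite mulrA.
Qed.

Lemma invertible_dual_basis I : invertible I ->
  exists d l, dual_family I d l /\ \sum_(p <- l) p.1 * p.2 = d.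
Proof.
move=> [U [[Ufrac _ _ _ _] hU]].
have [_ [l [hl e]]] : tprod I U (1, 1) by apply/(hU (1, 1) regular1); exists 1.
have [|l' [hd e']] := @tfrac_sum_dual I l.
  move=> q ql; have [Iq Uq] := hl q ql; split=> [||b Ib]; [exact: Ufrac | by [] |].
  have [|c] := (hU (b * q.2.1, q.2.2) (Ufrac _ Uq)).1.
    split; first exact: Ufrac Uq.
    exists [:: (b, q.2)]; split; first by move=> p; rewrite inE => /eqP ->.
    by rewrite /tfrac_eq /tfrac_add /=; ring.
  by rewrite /tfrac_eq /= mulr1; exists c.
exists (tfrac_sum l).2, l'; split => //.
by rewrite e'; move: e; rewrite /tfrac_eq /= mul1r mulr1.
Qed.

Lemma partition_unity_mem P d (l : seq (R * R)) a :
  regular d -> \sum_(p <- l) p.1 * p.2 = d -> is_ideal P ->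
  (forall p, p \in l -> exists2 z, P z & a * (p.1 * p.2) = z * d) -> P a.
Proof.
move=> hd hsum hP hl.
have Pd : is_ideal (fun w => exists2 z, P z & w = z * d).
  split; first by exists 0; [exact: ideal0 | rewrite mul0r].
  - by move=> _ _ [z1 h1 ->] [z2 h2 ->]; exists (z1 + z2); [exact: idealD | rewrite mulrDl].
  - by move=> r _ [z h ->]; exists (r * z); [exact: idealMl | rewrite mulrA].
have [z Pz] := ideal_sum Pd hl.
by rewrite -mulr_sumr hsum => /(regular_mulIf hd) ->.
Qed.

Lemma invertible_fin_gen I : invertible I ->
  exists2 s : seq R, (forall a, a \in s -> I a) & I `<=` span s.
Proof.
move=> /invertible_dual_basis [d [l [[hd hl] hsum]]].
exists [seq p.1 | p <- l] => [_ /mapP [p pl ->]|a Ia]; first by case: (hl p pl).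
apply: (partition_unity_mem hd hsum (span_ideal _)) => p pl.
have [_ /(_ a Ia) [c ec]] := hl p pl.
exists (c * p.1); first by apply: (idealMl (span_ideal _)); apply: span_mem; exact: map_f.
by rewrite mulrCA ec; ring.
Qed.

(* The conductor (xA : A), equal to x A^-1 when A is invertible. *)
Definition colon x A : set R := fun a => forall b, A b -> exists c, a * b = x * c.

Lemma colon_ideal x A : is_ideal (colon x A).
Proof.
split.
- by move=> b _; exists 0; rewrite mul0r mulr0.
- move=> a1 a2 h1 h2 b Ab; have [c1 e1] := h1 b Ab; have [c2 e2] := h2 b Ab.
  by exists (c1 + c2); rewrite mulrDl e1 e2 mulrDr.
- move=> r a h b Ab; have [c e] := h b Ab.
  by exists (r * c); rewrite -mulrA e mulrCA.
Qed.

Lemma colon_of_dual I x d w e : regular d ->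
  (forall b, I b -> exists c, b * w = c * d) -> x * w = e * d -> colon x I e.
Proof.
move=> hd hw xw b /hw [c ec]; exists c; apply: (regular_mulIf hd).
by rewrite mulrAC -xw -!mulrA [w * b]mulrC ec.
Qed.

Lemma invertible_colon_mem I x s : is_ideal I -> invertible I -> I x -> regular x ->
  (forall a, colon x I a -> exists r, s * a = x * r) -> I s.
Proof.
move=> hI /invertible_dual_basis [d [l [[hd hl] hsum]]] Ix xr hs.
apply: (partition_unity_mem hd hsum hI) => p pl.
have [Ip hp] := hl p pl; have [e ee] := hp x Ix.
have [f ef] := hs e (colon_of_dual hd hp ee).
exists (p.1 * f); first exact: (idealMr hI).
apply: (regular_mulIf xr).
have -> : s * (p.1 * p.2) * x = s * p.1 * (x * p.2) by ring.
have -> : s * p.1 * (x * p.2) = p.1 * (s * e) * d by rewrite ee; ring.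
by rewrite ef; ring.
Qed.

Lemma invertible_colon_generator I x m : invertible I -> I x -> maximal_ideal m ->
  exists p e c, [/\ I p, colon x I e, ~ m c & x * c = p * e].
Proof.
move=> /invertible_dual_basis [d [l [[hd hl] hsum]]] Ix hm.
have [p pl [c [nmc ec]]] : exists2 p, p \in l & exists c, ~ m c /\ p.1 * p.2 = c * d.
  apply: contrapT => hno; apply: (maximal_ideal_neq1 hm).
  apply: (partition_unity_mem hd hsum (maximal_ideal_ideal hm)) => p pl.
  have [Ip /(_ _ Ip) [c ec]] := hl p pl; exists c; last by rewrite mul1r.
  by apply: contrapT => nmc; apply: hno; exists p => //; exists c.
have [Ip hp] := hl p pl; have [e ee] := hp x Ix.
exists p.1, e, c; split => //; first exact: colon_of_dual hd hp ee.
by apply: (regular_mulIf hd); rewrite -mulrA -ec mulrCA ee mulrA.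
Qed.

Lemma colon_mul x A al a : A al -> colon x A a -> exists r, al * a = x * r.
Proof. by move=> Aal /(_ al Aal) [r er]; exists r; rewrite mulrC. Qed.

Lemma colon_gen_self I x p e c : regular x -> I p -> x * c = p * e ->
  forall a, colon x I a -> exists r, c * a = e * r.
Proof.
move=> xr Ip xc a /(colon_mul Ip) [g eg]; exists g; apply: (regular_mulIf xr).
have -> : c * a * x = p * a * e by rewrite -mulrA [a * x]mulrC mulrA [c * x]mulrC xc; ring.
by rewrite eg; ring.
Qed.

Lemma colon_gen_mem I x al q e c : I al -> x * c = q * e ->
  forall a, colon x I a -> exists r, c * al * a = e * r.
Proof.
move=> Ial xc a /(colon_mul Ial) [g eg]; exists (g * q).
by rewrite -mulrA eg mulrCA mulrA xc; ring.
Qed.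

(* A A_m is contained in y A_m, with a single denominator for all of A. *)
Definition loc_sub_principal m A y :=
  exists2 v, ~ m v & forall a, A a -> exists r, v * a = y * r.

Definition ideal_add A B : set R := fun a => exists a1 a2, [/\ A a1, B a2 & a = a1 + a2].

Fixpoint ideal_psum (F : nat -> set R) n : set R :=
  if n is k.+1 then ideal_add (ideal_psum F k) (F k) else [set 0].

Section IdealPartialSums.
Variable F : nat -> set R.

Lemma loc_sub_principal_psum m y n : maximal_ideal m ->
  (forall j, (j < n)%N -> loc_sub_principal m (F j) y) ->
  loc_sub_principal m (ideal_psum F n) y.
Proof.
move=> hm; elim: n => [|n IH] hj.
  by exists 1 => [|a ->]; [exact: maximal_ideal_neq1 | exists 0; rewrite !mulr0].
have [v nmv hv] := IH (fun j jn => hj j (ltnW jn)).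
have [w nmw hw] := hj n (ltnSn n).
exists (v * w) => [|_ [a1 [a2 [/hv [r1 e1] /hw [r2 e2] ->]]]]; first exact: maximal_notinM.
exists (w * r1 + v * r2).
have -> : v * w * (a1 + a2) = w * (v * a1) + v * (w * a2) by ring.
by rewrite e1 e2; ring.
Qed.

Hypothesis F_ideal : forall n, is_ideal (F n).

Lemma ideal_psum_ideal n : is_ideal (ideal_psum F n).
Proof.
elim: n => [|n IH] /=.
  split => //; first by move=> a b -> ->; rewrite addr0.
  by move=> r a ->; rewrite mulr0.
split.
- by exists 0, 0; split; [exact: ideal0 | exact: ideal0 | rewrite addr0].
- move=> _ _ [a1 [a2 [h1 h2 ->]]] [b1 [b2 [h3 h4 ->]]].
  by exists (a1 + b1), (a2 + b2); split; [exact: idealD | exact: idealD | ring].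
- move=> r _ [a1 [a2 [h1 h2 ->]]].
  by exists (r * a1), (r * a2); split; [exact: idealMl | exact: idealMl | ring].
Qed.

Lemma ideal_psum_mono n k : (n <= k)%N -> ideal_psum F n `<=` ideal_psum F k.
Proof.
elim: k => [|k IH]; first by rewrite leqn0 => /eqP ->.
rewrite leq_eqVlt => /orP [/eqP -> //|/IH nk a /nk ha].
by exists a, 0; split; [| exact: ideal0 | rewrite addr0].
Qed.

Lemma ideal_psumS n : F n `<=` ideal_psum F n.+1.
Proof.
by move=> a Fa; exists 0, a; split; [exact: ideal0 (ideal_psum_ideal n) | | rewrite add0r].
Qed.

End IdealPartialSums.

Definition comaximal A B := exists2 a, A a & B (1 - a).

Lemma comaximal_sym A B : comaximal A B -> comaximal B A.
Proof. by move=> [a Aa B1a]; exists (1 - a); rewrite // opprB addrC subrK. Qed.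

Lemma comaximal_notin m A B : maximal_ideal m -> comaximal A B -> B `<=` m ->
  exists2 a, A a & ~ m a.
Proof.
move=> hm [a Aa B1a] Bm; exists a => // ma; apply: (maximal_ideal_neq1 hm).
by rewrite -(subrK a 1); exact: (idealD (maximal_ideal_ideal hm) (Bm _ B1a) ma).
Qed.

Definition colon_union x (F : nat -> set R) : set R :=
  fun a => exists n, ideal_psum (fun k => colon x (F k)) n a.

Section ColonUnion.
Variables (x : R) (F : nat -> set R).
Hypotheses (xreg : regular x) (F_ideal : forall n, is_ideal (F n)) (Fx : forall n, F n x).
Hypothesis F_inv : forall n, invertible (F n).
Hypothesis F_proper : forall n, exists2 M, maximal_ideal M & F n `<=` M.
Hypothesis F_comax : forall j k, j != k -> comaximal (F j) (F k).

Let C k := colon x (F k).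
Let C_ideal k : is_ideal (C k) := colon_ideal x (F k).

Lemma colon_union_ideal : is_ideal (colon_union x F).
Proof.
split; first by exists 0%N.
- move=> a b [n ha] [k hb]; exists (maxn n k).
  apply: (idealD (ideal_psum_ideal C_ideal _)).
    exact: ideal_psum_mono (leq_maxl n k) _ ha.
  exact: ideal_psum_mono (leq_maxr n k) _ hb.
- by move=> r a [n ha]; exists n; exact: (idealMl (ideal_psum_ideal C_ideal n)).
Qed.

Lemma colon_sub_union n : C n `<=` colon_union x F.
Proof. by move=> a Ca; exists n.+1; exact: ideal_psumS. Qed.

Lemma colon_union_regular : regular_ideal (colon_union x F).
Proof. by exists x; split=> //; apply: (@colon_sub_union 0%N) => b _; exists b. Qed.

Lemma at_most_one_sub_maximal m : maximal_ideal m ->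
  exists k, forall j, j != k -> exists2 a, F j a & ~ m a.
Proof.
move=> hm; have [[k Fkm]|none] := pselect (exists k, F k `<=` m).
  by exists k => j jk; exact: comaximal_notin hm (F_comax jk) Fkm.
exists 0%N => j _; have [a [Fja nma]] := nonsubset (fun Fjm => none (ex_intro _ j Fjm)).
by exists a.
Qed.

Lemma colon_union_locally_principal : locally_principal (colon_union x F).
Proof.
move=> m hm; apply/(loc_principalP hm colon_union_ideal).
have [k hk] := at_most_one_sub_maximal hm.
have [p [e [c [Fkp Ce nmc xc]]]] := invertible_colon_generator (F_inv k) (Fx k) hm.
exists e => [|a [n ha]]; first exact: colon_sub_union Ce.
suff [v nmv /(_ a ha) [r er]] : loc_sub_principal m (ideal_psum C n) e by exists v, r.
apply: loc_sub_principal_psum => // j _; have [->|jk] := eqVneq j k.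
  by exists c => //; exact: colon_gen_self xreg Fkp xc.
have [al Fal nmal] := hk j jk.
by exists (c * al); [exact: maximal_notinM | exact: colon_gen_mem Fal xc].
Qed.

Lemma colon_union_not_invertible : ~ invertible (colon_union x F).
Proof.
move=> /invertible_fin_gen [s sJ Js].
have [n sn] : exists n, forall a, a \in s -> ideal_psum C n a.
  elim: s sJ {Js} => [|a s IH] sJ; first by exists 0%N.
  have [n1 h1] := sJ a (mem_head _ _).
  have [|n2 h2] := IH; first by move=> b bs; apply: sJ; rewrite inE bs orbT.
  exists (maxn n1 n2) => b; rewrite inE => /predU1P [->|/h2].
    exact: ideal_psum_mono (leq_maxl _ _) _ h1.
  exact: ideal_psum_mono (leq_maxr _ _) _.
have [M hM FnM] := F_proper n.
have [v nMv hv] : loc_sub_principal M (ideal_psum C n) x.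
  apply: loc_sub_principal_psum => // j jn.
  have [al Fal nMal] := comaximal_notin hM (F_comax (negbT (ltn_eqF jn))) FnM.
  by exists al => // a /(colon_mul Fal).
apply/nMv/FnM/(invertible_colon_mem (F_ideal n) (F_inv n) (Fx n) xreg) => a Ca.
have Jn : colon_union x F `<=` ideal_psum C n.
  by move=> b /Js /(span_sub (ideal_psum_ideal C_ideal n) sn).
by apply/hv/Jn; exact: colon_sub_union Ca.
Qed.

End ColonUnion.

Definition finitely_many (P : set (set R)) :=
  exists n (f : nat -> set R), forall m, P m ->
    exists i, (i < n)%N /\ forall y, m y <-> f i y.

Lemma finitely_manyS (P Q : set (set R)) : P `<=` Q -> finitely_many Q -> finitely_many P.
Proof. by move=> PQ [n [f hf]]; exists n, f => m /PQ /hf. Qed.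

Lemma finitely_manyU (P Q : set (set R)) :
  finitely_many P -> finitely_many Q -> finitely_many (P `|` Q).
Proof.
move=> [n1 [f1 h1]] [n2 [f2 h2]].
exists (n1 + n2)%N, (fun i => if (i < n1)%N then f1 i else f2 (i - n1)%N).
move=> m [/h1 [i [i1 e]]|/h2 [i [i2 e]]]; first by exists i; rewrite i1 ltn_addr.
by exists (n1 + i)%N; rewrite ltn_add2l i2 ltnNge leq_addr addKn.
Qed.

Lemma not_finitely_many_two (P : set (set R)) :
  ~ finitely_many P -> exists M N, [/\ P M, P N & M <> N].
Proof.
move=> infP.
have [M PM] : exists M, P M.
  apply: contrapT => noM; apply: infP; exists 0%N, (fun=> set0) => m Pm.
  by case: noM; exists m.
have [N PN MN] : exists2 N, P N & M <> N.
  apply: contrapT => noN; apply: infP; exists 1%N, (fun=> M) => m Pm; exists 0%N.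
  have -> : m = M by apply: contrapT => mM; apply: noN; exists m => // /esym.
  by split.
by exists M, N.
Qed.

Definition avoiding x (S : seq (seq R)) : set (set R) :=
  fun m => [/\ maximal_ideal m, m x & forall s, s \in S -> ~ span s `<=` m].

Definition fresh_ideal x (S : seq (seq R)) (s : seq R) :=
  [/\ span s x, exists2 M, maximal_ideal M & span s `<=` M
    & forall t, t \in S -> comaximal (span t) (span s)].

Lemma comaximal_witnesses M (S : seq (seq R)) : maximal_ideal M ->
  (forall s, s \in S -> ~ span s `<=` M) ->
  exists2 t : seq R, (forall a, a \in t -> M a) &
    forall s, s \in S -> exists2 b, span s b & (1 - b) \in t.
Proof.
move=> hM; elim: S => [|s S IH] hS; first by exists [::].
have [|t tM ht] := IH; first by move=> s' s'S; apply: hS; rewrite inE s'S orbT.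
have [b [sb nMb]] := nonsubset (hS s (mem_head _ _)).
have [c Mc] := maximal_inv_mod hM nMb.
exists (1 - c * b :: t) => [a /predU1P [->|/tM] //|s'].
rewrite inE => /predU1P [->|/ht [b' sb' tb']].
  by exists (c * b); [exact: (idealMl (span_ideal s)) | exact: mem_head].
by exists b' => //; rewrite inE tb' orbT.
Qed.

Lemma fresh_ideal_of_avoiding x S M y : avoiding x S M -> M y ->
  exists2 s, fresh_ideal x S s & span s y.
Proof.
move=> [hM Mx hS] My; have [t tM ht] := comaximal_witnesses hM hS.
exists [:: x, y & t]; last by apply: span_mem; rewrite !inE eqxx orbT.
split; first by apply: span_mem; exact: mem_head.
  exists M => //; apply: span_sub (maximal_ideal_ideal hM) _ => a.
  by rewrite !inE => /predU1P [->|/predU1P [->|/tM]].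
by move=> s' /ht [b sb tb]; exists b => //; apply: span_mem; rewrite !inE tb !orbT.
Qed.

Lemma fresh_ideal_step x S : ~ finitely_many (avoiding x S) ->
  exists2 s, fresh_ideal x S s & ~ finitely_many (avoiding x (rcons S s)).
Proof.
move=> infS; have [M [N [AM AN MN]]] := not_finitely_many_two infS.
have [[hM _ _] [hN _ _]] := (AM, AN).
have [e [Me nNe]] := nonsubset (fun MsubN => MN (maximal_ideal_sub_eq hM hN MsubN)).
(* No maximal ideal contains both c e and 1 - c e, so every remaining maximal
   ideal avoids one of the two new candidates. *)
have [c Nc] := maximal_inv_mod hN nNe.
have [sM fM sMce] := fresh_ideal_of_avoiding AM (idealMl (maximal_ideal_ideal hM) c Me).
have [sN fN sN1] := fresh_ideal_of_avoiding AN Nc.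
have [finM|] := pselect (finitely_many (avoiding x (rcons S sM))); last by exists sM.
have [finN|] := pselect (finitely_many (avoiding x (rcons S sN))); last by exists sN.
case: infS; apply: finitely_manyS (finitely_manyU finM finN) => m [hm mx mS].
have avoid s : ~ span s `<=` m -> avoiding x (rcons S s) m.
  by move=> sm; split=> // t; rewrite mem_rcons inE => /predU1P [->|/mS].
have [sMm|/avoid] := pselect (span sM `<=` m); last by left.
have [sNm|/avoid] := pselect (span sN `<=` m); last by right.
case: (maximal_ideal_neq1 hm); rewrite -(subrK (c * e) 1).
exact: (idealD (maximal_ideal_ideal hm) (sNm _ sN1) (sMm _ sMce)).
Qed.

Lemma invertible_of_finite_character : prufer R -> finite_character R ->
  forall I, is_ideal I -> regular_ideal I -> locally_principal I -> invertible I.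
Proof.
move=> hP hfc I hI [x [Ix xr]] hlp; have [n [f hf]] := hfc x xr.
have /choice [g hg] : forall i, exists y, I y /\ (maximal_ideal (f i) ->
    forall a, I a -> exists v r, ~ f i v /\ v * a = y * r).
  move=> i; have [hm|nm] := pselect (maximal_ideal (f i)); last by exists x; split=> // /nm.
  by have /(loc_principalP hm hI) [y Iy hy] := hlp _ hm; exists y.
pose K := span (x :: mkseq g n).
have Kgen i : (i < n)%N -> K (g i).
  by move=> ltin; apply: span_mem; rewrite inE map_f ?orbT // mem_iota.
have -> : I = K.
  apply/seteqP; split=> [a Ia|]; last first.
    by apply: span_sub hI _ => a; rewrite inE => /predU1P [->|/mapP [i _ ->]] //; case: (hg i).
  apply: local_global_mem (span_ideal _) _ => m hm.
  have [mx|nmx] := pselect (m x); last first.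
    exists x => //; rewrite mulrC; apply: (idealMl (span_ideal _)).
    exact: span_mem (mem_head _ _).
  have [i [ltin mfi]] := hf m hm mx.
  have {}mfi : m = f i by apply/funext => y; exact/propext.
  rewrite {}mfi in hm *; have [v [r [nfv var]]] := (hg i).2 hm a Ia.
  by exists v; rewrite // var; exact: (idealMr (span_ideal _) _ (Kgen i ltin)).
apply: hP; [exact: span_ideal | exact: span_fin_gen | exists x; split=> //].
exact: span_mem (mem_head _ _).
Qed.

Lemma finite_character_of_invertible : prufer R ->
  (forall I, is_ideal I -> regular_ideal I -> locally_principal I -> invertible I) ->
  finite_character R.
Proof.
move=> hP H x xr; apply: contrapT => nfc.
have inf0 : ~ finitely_many (avoiding x [::]).
  by move=> [n [f hf]]; apply: nfc; exists n, f => m hm mx; exact: hf.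
have [f hf] := dependent_choice_seq (P := fun S => ~ finitely_many (avoiding x S))
  inf0 (@fresh_ideal_step x).
pose F n := span (f n).
have Fx n : F n x by case: (hf n).
have F_comax_lt j k : (j < k)%N -> comaximal (F j) (F k).
  by move=> jk; case: (hf k) => _ _; apply; apply: map_f; rewrite mem_iota.
have F_inv n : invertible (F n).
  by apply: hP; [exact: span_ideal | exact: span_fin_gen | exists x].
have F_proper n : exists2 M, maximal_ideal M & F n `<=` M by case: (hf n).
have F_comax j k : j != k -> comaximal (F j) (F k).
  by case: ltngtP => // [jk|kj] _; [exact: F_comax_lt | exact/comaximal_sym/F_comax_lt].
apply: (colon_union_not_invertible xr (fun n => span_ideal _) Fx F_inv F_proper F_comax).
apply: H.
- exact: colon_union_ideal.
- exact: colon_union_regular.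
- exact: colon_union_locally_principal.
Qed.

End CommRing.

Theorem corollary4p6 (R : comPzRingType) :
  prufer R ->
  ((forall I : R -> Prop, is_ideal I -> regular_ideal I ->
      locally_principal I -> invertible I)
   <-> finite_character R).
Proof.
move=> hP; split; first exact: finite_character_of_invertible.
exact: invertible_of_finite_character.
Qed.
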